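(* Let $n\ge3$ and let $W\subset\mathbb{C}^n$ be a real $3$-dimensional subspace. Given any unit vector $x\in\mathbb{C}^n$ and any unit vector $e\perp\mathrm{span}_{\mathbb{R}}\{x,Jx\}$, there exists $V\in\mathrm{SU}(n)\cdot W$ with $x,e\in V$.
   Context: $J$ denotes multiplication by $i$ on $\mathbb{C}^n=\mathbb{R}^{2n}$, with the standard real inner product. $\mathrm{SU}(n)\cdot W$ is the orbit of $W$ in the Grassmannian of real $3$-planes under the standard action of $\mathrm{SU}(n)$. *)

From HB Require Import structures.
From mathcomp Require Import all_boot all_order all_algebra.
From mathcomp Require Import reals.
From mathcomp Require Import complex.
Set Implicit Arguments. Unset Strict Implicit. Unset Printing Implicit Defensive.
Import Order.TTheory GRing.Theory Num.Theory.
Local Open Scope ring_scope.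

(* C^n is modelled as column vectors 'cV[R[i]]_n over the complex numbers
   R[i] built on the real numbers R : realType.  As a real vector space it is
   R^(2n); J is multiplication by 'i. *)

Section Defs.
Variables (R : realType) (n : nat).
Local Notation C := (complex R).
Local Notation vec := 'cV[C]_n.

Definition rdot (u v : vec) : R :=
  @complex.Re R (\sum_(k < n) (conjc (u k 0) * v k 0)).

Definition Jmul (u : vec) : vec := (Complex 0 1 : C) *: u.

Definition rscale (a : R) (u : vec) : vec := (Complex a 0 : C) *: u.

Definition is_unit_vec (u : vec) : Prop := rdot u u = 1.

Definition in_rspan2 (x y v : vec) : Prop :=
  exists a b : R, v = rscale a x + rscale b y.

Definition perp_xJx (x u : vec) : Prop :=
  forall v, in_rspan2 x (Jmul x) v -> rdot u v = 0.

Definition rlin_indep3 (w1 w2 w3 : vec) : Prop :=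
  forall a b c : R, rscale a w1 + rscale b w2 + rscale c w3 = 0 ->
    [/\ a = 0, b = 0 & c = 0].

Definition real_3_subspace (W : vec -> Prop) : Prop :=
  exists w1 w2 w3 : vec, rlin_indep3 w1 w2 w3 /\
    forall v, W v <-> exists a b c : R, v = rscale a w1 + rscale b w2 + rscale c w3.

Definition adjmx (U : 'M[C]_n) : 'M[C]_n := (map_mx (@conjc R) U)^T.

Definition in_SU (U : 'M[C]_n) : Prop := adjmx U *m U = 1%:M /\ \det U = 1.

Definition act_set (U : 'M[C]_n) (W : vec -> Prop) (v : vec) : Prop :=
  exists w, W w /\ v = U *m w.

Definition in_SU_orbit (W V : vec -> Prop) : Prop :=
  exists U, in_SU U /\ forall v, V v <-> act_set U W v.

End Defs.

From HB Require Import structures.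
From mathcomp Require Import all_boot all_order all_algebra.
From mathcomp Require Import reals complex.
From mathcomp Require Import spectral sesquilinear.
From mathcomp Require Import ring.
Import Order.TTheory GRing.Theory Num.Theory Num.Def.
Local Open Scope ring_scope.
Set Implicit Arguments. Unset Strict Implicit. Unset Printing Implicit Defensive.

(* Everything is phrased with the Hermitian product <u, v>, whose real part is
   the real inner product and whose imaginary part is -<u, Jv>; thus e is
   orthogonal to x and Jx exactly when <x, e> = 0.  W contains a Hermitian-
   orthonormal pair w1, w2: for a nonzero f1 in W, the vectors g of W with
   <f1, g> = 0 are cut out by two real equations, one of which can be solved
   with the coefficient of f1 alone, leaving a nonzero solution.  For n >= 3 any
   Hermitian-orthonormal pair is the first two columns of a matrix of SU(n):
   complete it to a unitary matrix and rescale the third column by the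
   conjugate of the determinant.  If P, Q in SU(n) have first columns (w1, w2)
   and (x, e), then Q P^* is in SU(n) and maps w1, w2 to x, e. *)

Section UnitaryCompletion.
Variable C : numClosedFieldType.
Local Notation "B ^!" :=
  (orthomx conjC (mx_of_hermitian (hermitian1mx _)) B) : matrix_set_scope.

Lemma col_mx_ortho_unitary m n (V : 'M[C]_(m, n)) : V \is unitarymx ->
  col_mx V (schmidt (row_base V^!%MS)) \is unitarymx.
Proof.
move=> Vu; apply/unitarymxP; rewrite tr_col_mx map_row_mx mul_col_row.
rewrite !(unitarymxP _) ?schmidt_unitarymx ?rank_leq_col //.
rewrite !(orthomx1P _) -?scalar_mx_block //.
  by rewrite eqmx_schmidt_free ?eq_row_base ?row_base_free.
by rewrite orthomx_sym eqmx_schmidt_free ?eq_row_base ?row_base_free.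
Qed.

Lemma unitary_completion m n (V : 'M[C]_(m, n)) (le_mn : (m <= n)%N) :
  V \is unitarymx ->
  exists2 Q : 'M[C]_n, Q \is unitarymx &
    forall i : 'I_m, row (widen_ord le_mn i) Q = row i V.
Proof.
move=> Vu; set p := (m + \rank V^!)%N.
have def_n : p = n by rewrite /p rank_ortho mxrank_unitary // subnKC.
have le_mp : (m <= p)%N by rewrite leq_addr.
suff [Q Qu QV] : exists2 Q : 'M[C]_(p, n), Q \is unitarymx &
    forall i : 'I_m, row (widen_ord le_mp i) Q = row i V.
  move: le_mp Q Qu QV; rewrite def_n => le_mn' Q Qu QV.
  by exists Q => // i; rewrite -QV; congr row; apply: val_inj.
exists (col_mx V (schmidt (row_base V^!%MS))); first exact: col_mx_ortho_unitary.
by move=> i; rewrite -(rowKu i V (schmidt (row_base V^!%MS))); congr row; apply: val_inj.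
Qed.

Lemma unitary_diag_mx n (d : 'rV[C]_n) :
  (forall i, d 0 i * (d 0 i)^* = 1) -> diag_mx d \is unitarymx.
Proof.
move=> dd; apply/unitarymxP; rewrite tr_diag_mx map_diag_mx mul_diag_mx.
apply/matrixP => i j; rewrite !mxE.
by case: (eqVneq i j) => [->|_]; rewrite ?mulr1n ?dd // !mulr0n mulr0.
Qed.

Lemma unitary_det1_completion m n (V : 'M[C]_(m, n)) (lt_mn : (m < n)%N) :
  V \is unitarymx ->
  exists Q : 'M[C]_n, [/\ Q \is unitarymx, \det Q = 1 &
    forall i : 'I_m, row (widen_ord (ltnW lt_mn) i) Q = row i V].
Proof.
move=> Vu; have [Q0 Q0u Q0V] := unitary_completion (ltnW lt_mn) Vu.
set d := \det Q0; pose k : 'I_n := Ordinal lt_mn.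
have dd : d * d^* = 1.
  have /(congr1 determinant) := unitarymxP Q0u.
  by rewrite det_mulmx det1 det_map_mx det_tr.
(* |d| = 1, so scaling row m of Q0 by d^* makes the determinant 1 *)
pose D := diag_mx (\row_i (if i == k then d^* else 1)).
exists (D *m Q0); split.
- apply: mul_unitarymx Q0u; apply: unitary_diag_mx => i; rewrite mxE.
  by case: ifP => _; rewrite ?conjCK 1?mulrC // conjC1 mulr1.
- rewrite det_mulmx det_diag (bigD1 k) //= big1 => [|i /negbTE ik]; last first.
    by rewrite mxE ik.
  by rewrite mxE eqxx mulr1 mulrC.
- move=> i; rewrite row_mul row_diag_mx -scalemxAl -rowE Q0V mxE.
  have /negbTE -> : widen_ord (ltnW lt_mn) i != k.
    by rewrite -val_eqE /= neq_ltn ltn_ord.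
  by rewrite scale1r.
Qed.

End UnitaryCompletion.

Section HermitianProduct.
Variables (R : realType) (n : nat).
Local Notation C := (complex R).
Local Notation vec := 'cV[C]_n.
Implicit Types (u v w : vec) (a : R).

Definition hdot u v : C := \sum_(k < n) (u k 0)^* * v k 0.

Lemma hdotDr u v w : hdot u (v + w) = hdot u v + hdot u w.
Proof. by rewrite /hdot -big_split; apply: eq_bigr => k _; rewrite mxE mulrDr. Qed.

Lemma hdotZr u (c : C) v : hdot u (c *: v) = c * hdot u v.
Proof. by rewrite /hdot mulr_sumr; apply: eq_bigr => k _; rewrite mxE mulrCA. Qed.

Lemma hdotZl (c : C) u v : hdot (c *: u) v = c^* * hdot u v.
Proof. by rewrite /hdot mulr_sumr; apply: eq_bigr => k _; rewrite mxE rmorphM mulrA. Qed.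

Lemma hdotC u v : hdot v u = (hdot u v)^*.
Proof. by rewrite /hdot rmorph_sum; apply: eq_bigr => k _; rewrite rmorphM /= conjCK mulrC. Qed.

Lemma hdot_ge0 u : 0 <= hdot u u.
Proof. by apply: sumr_ge0 => k _; rewrite mulrC mul_conjC_ge0. Qed.

Lemma hdot_eq0 u : hdot u u = 0 -> u = 0.
Proof.
move=> /eqP; rewrite psumr_eq0 => [/allP u0|k _]; last by rewrite mulrC mul_conjC_ge0.
apply/matrixP => k j; rewrite (ord1 j) mxE.
by have /implyP/(_ isT) := u0 k (mem_index_enum k); rewrite mulf_eq0 conjC_eq0 orbb => /eqP.
Qed.

Lemma rdotE u v : rdot u v = complex.Re (hdot u v).
Proof. by []. Qed.

Lemma hdot_rscale a b u v :
  hdot (rscale a u) (rscale b v) = Complex (a * b) 0 * hdot u v.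
Proof.
rewrite /rscale hdotZl hdotZr; case: (hdot u v) => p q /=.
by congr Complex; ring.
Qed.

Lemma hdotE u v : hdot u v = Complex (rdot u v) (- rdot u (Jmul v)).
Proof.
by rewrite !rdotE /Jmul hdotZr; case: (hdot u v) => a b /=; congr Complex; ring.
Qed.

Lemma hdot_self u : hdot u u = ((rdot u u)%:C)%C.
Proof.
have := ger0_Im (hdot_ge0 u); rewrite {1}hdotE /= => Im0.
by rewrite hdotE Im0.
Qed.

Lemma rdot_gt0 u : u != 0 -> 0 < rdot u u.
Proof.
move=> u0; have := hdot_ge0 u; rewrite hdot_self lecE /= => /andP[_].
rewrite le_eqVlt => /orP[/eqP rdot0|//]; case/eqP: u0.
by apply: hdot_eq0; rewrite hdot_self -rdot0.
Qed.

Lemma unit_vec_hdot u : is_unit_vec u -> hdot u u = 1.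
Proof. by rewrite /is_unit_vec hdot_self => ->. Qed.

Lemma perp_xJx_hdot x e : perp_xJx x e -> hdot x e = 0.
Proof.
move=> xe; have ex : rdot e x = 0.
  by apply: xe; exists 1, 0; rewrite /rscale scale1r scale0r addr0.
have eJx : rdot e (Jmul x) = 0.
  by apply: xe; exists 0, 1; rewrite /rscale scale1r scale0r add0r.
by rewrite hdotC hdotE ex eJx oppr0 conjC0.
Qed.

Lemma rscaleA a b u : rscale a (rscale b u) = rscale (a * b) u.
Proof. by rewrite /rscale scalerA /=; congr (_ *: _); congr Complex; ring. Qed.

Lemma rscale1 u : rscale 1 u = u.
Proof. exact: scale1r. Qed.

Lemma rscale0 u : rscale 0 u = 0.
Proof. exact: scale0r. Qed.

Lemma real_3_subspace_rscale (W : vec -> Prop) a v :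
  real_3_subspace W -> W v -> W (rscale a v).
Proof.
move=> [f1 [f2 [f3 [_ HW]]]] /HW [p [q [r ->]]]; apply/HW.
by exists (a * p), (a * q), (a * r); rewrite /rscale !scalerDr -!/(rscale _ _) !rscaleA.
Qed.

Lemma real_3_subspace_hortho (W : vec -> Prop) : real_3_subspace W ->
  exists f g, [/\ W f, W g, f != 0, g != 0 & hdot f g = 0].
Proof.
move=> [f1 [f2 [f3 [indep HW]]]].
have Wf1 : W f1 by apply/HW; exists 1, 0, 0; rewrite rscale1 !rscale0 !addr0.
have f1_neq0 : f1 != 0.
  apply/eqP => f10; have [] := indep 1 0 0; last by move/eqP; rewrite oner_eq0.
  by rewrite f10 rscale1 !rscale0 !addr0.
have p_gt0 := rdot_gt0 f1_neq0; set p := rdot f1 f1 in p_gt0.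
case E2: (hdot f1 f2) => [x2 y2]; case E3: (hdot f1 f3) => [x3 y3].
(* the imaginary part of <f1, a f1 + b f2 + c f3> does not involve a *)
have [b [c [bc_neq0 bc_eq0]]] : exists b c : R, (b != 0 \/ c != 0) /\ b * y2 + c * y3 = 0.
  have [y20|y2_neq0] := eqVneq y2 0.
    by exists 1, 0; rewrite y20 oner_eq0; split; [left | ring].
  by exists (- y3), y2; split; [right | ring].
pose a := - (b * x2 + c * x3) / p.
exists f1, (rscale a f1 + rscale b f2 + rscale c f3); split => //.
- by apply/HW; exists a, b, c.
- by apply/eqP => /indep [_ b0 c0]; case: bc_neq0 => /eqP.
- rewrite !hdotDr /rscale !hdotZr hdot_self E2 E3 /= -/p /a; congr Complex.
    by field; rewrite gt_eqF.
  by rewrite -[RHS]bc_eq0; ring.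
Qed.

Definition rnormalize u := rscale (Num.sqrt (rdot u u))^-1 u.

Lemma hdot_rnormalize_self u : u != 0 -> hdot (rnormalize u) (rnormalize u) = 1.
Proof.
move=> u0; rewrite hdot_rscale hdot_self /=.
have r_gt0 := rdot_gt0 u0; have s_gt0 : 0 < Num.sqrt (rdot u u) by rewrite sqrtr_gt0.
have := sqr_sqrtr (ltW r_gt0); move: s_gt0.
set s := Num.sqrt _; set r := rdot u u => s_gt0 <-.
by congr Complex; field; rewrite gt_eqF.
Qed.

Lemma hdot_rnormalize_eq0 u v : hdot u v = 0 -> hdot (rnormalize u) (rnormalize v) = 0.
Proof. by rewrite hdot_rscale => ->; rewrite mulr0. Qed.

Lemma real_3_subspace_orthonormal_pair (W : vec -> Prop) : real_3_subspace W ->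
  exists w1 w2, [/\ W w1, W w2, hdot w1 w1 = 1, hdot w2 w2 = 1 & hdot w1 w2 = 0].
Proof.
move=> HW; have [f [g [Wf Wg f0 g0 fg]]] := real_3_subspace_hortho HW.
exists (rnormalize f), (rnormalize g).
by split; rewrite ?hdot_rnormalize_self ?hdot_rnormalize_eq0 //; apply: real_3_subspace_rscale.
Qed.

End HermitianProduct.

Section SpecialUnitary.
Variables (R : realType) (n : nat).
Local Notation C := (complex R).
Local Notation vec := 'cV[C]_n.
Implicit Types (u v : vec) (A B : 'M[C]_n).
Local Open Scope sesquilinear_scope.

Lemma adjmx_mul A B : adjmx (A *m B) = adjmx B *m adjmx A.
Proof. by rewrite /adjmx map_mxM trmx_mul. Qed.

Lemma adjmxK A : adjmx (adjmx A) = A.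
Proof. by apply/matrixP => i j; rewrite /adjmx !mxE /= conjcK. Qed.

Lemma det_adjmx A : \det (adjmx A) = (\det A)^*.
Proof. by rewrite /adjmx det_tr det_map_mx. Qed.

Lemma in_SU_trmx A : A \is unitarymx -> \det A = 1 -> in_SU A^T.
Proof.
move=> /unitarymxP Au Ad; split; last by rewrite det_tr.
have := congr1 (map_mx conjC) Au; rewrite map_mxM map_mx1 => <-.
by rewrite /adjmx map_trmx trmxK map_mxCK.
Qed.

Lemma in_SU_mul_adj A B : in_SU A -> in_SU B -> in_SU (A *m adjmx B).
Proof.
move=> [AA Ad] [BB Bd]; split; last by rewrite det_mulmx det_adjmx Ad Bd conjC1 mulr1.
rewrite adjmx_mul adjmxK -mulmxA (mulmxA (adjmx A)) AA mul1mx.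
exact: mulmx1C.
Qed.

Lemma trmx_mul_conjtr u v : u^T *m v^T^t* = (hdot v u)%:M.
Proof.
apply/matrixP => i j; rewrite !ord1 !mxE mulr1n.
by apply: eq_bigr => k _; rewrite !mxE mulrC.
Qed.

Lemma SU_with_columns (lt2n : (2 < n)%N) u v :
  hdot u u = 1 -> hdot v v = 1 -> hdot u v = 0 ->
  exists P, [/\ in_SU P, col (widen_ord (ltnW lt2n) 0) P = u
                       & col (widen_ord (ltnW lt2n) 1) P = v].
Proof.
move=> uu vv uv; pose V : 'M[C]_(1 + 1, n) := col_mx u^T v^T.
have Vu : V \is unitarymx.
  apply/unitarymxP; rewrite /V tr_col_mx map_row_mx mul_col_row !trmx_mul_conjtr.
  by rewrite uu vv [hdot v u]hdotC uv conjC0 raddf0 [1%:M]scalar_mx_block.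
have [Q [Qu Qd QV]] := unitary_det1_completion lt2n Vu.
exists Q^T; split; first exact: in_SU_trmx.
  have -> : (0 : 'I_2) = lshift 1 (0 : 'I_1) by apply: val_inj.
  by rewrite -tr_row QV /V (rowKu (0 : 'I_1) u^T v^T) row_id trmxK.
have -> : (1 : 'I_2) = rshift 1 (0 : 'I_1) by apply: val_inj.
by rewrite -tr_row QV /V (rowKd (0 : 'I_1) u^T v^T) row_id trmxK.
Qed.

Lemma in_SU_transport A B (i : 'I_n) u v :
  in_SU B -> col i B = u -> col i A = v -> A *m adjmx B *m u = v.
Proof. by move=> [BB _] <- <-; rewrite !colE -mulmxA (mulmxA (adjmx B)) BB mul1mx. Qed.

End SpecialUnitary.

Theorem lemma11p4 (R : realType) (n : nat) (W : 'cV[complex R]_n -> Prop)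
    (x e : 'cV[complex R]_n) :
  (3 <= n)%N ->
  real_3_subspace W ->
  is_unit_vec x -> is_unit_vec e -> perp_xJx x e ->
  exists V : 'cV[complex R]_n -> Prop, in_SU_orbit W V /\ V x /\ V e.
Proof.
move=> n3 HW /unit_vec_hdot xx /unit_vec_hdot ee /perp_xJx_hdot xe.
have [w1 [w2 [Ww1 Ww2 w11 w22 w12]]] := real_3_subspace_orthonormal_pair HW.
have [Pw [Pw_SU Pw1 Pw2]] := SU_with_columns n3 w11 w22 w12.
have [Px [Px_SU Px1 Px2]] := SU_with_columns n3 xx ee xe.
pose U := Px *m adjmx Pw.
exists (act_set U W); split; first by exists U; split; first exact: in_SU_mul_adj.
split; [exists w1 | exists w2]; split => //; symmetry.
  exact: in_SU_transport Pw_SU Pw1 Px1.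
exact: in_SU_transport Pw_SU Pw2 Px2.
Qed.
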